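(* Let $A$ be a monotonic modal algebra and let $S$ be a countable subset of $\mathcal{P}(A)$. Let $J_S(A)=\langle Q_S(A),\mathcal{V}_A\rangle$, where for each $F\in Q_S(A)$ $$\mathcal{V}_A(F)=\mathord{\uparrow}\bigl\{\{G\in Q_S(A)\mid x\in G\}\;\bigm|\; x\in A,\ \Box x\in F\bigr\},$$ the upward closure being taken in $\mathcal{P}(Q_S(A))$ ordered by inclusion. Then $J_S(A)$ is a monotonic neighborhood frame. Moreover, if $A$ is topped then $J_S(A)$ is topped, and if $A$ is cufi then $J_S(A)$ is cufi.
   Context: A modal algebra is a structure $\langle A;\lor,\land,-,\Box,0,1\rangle$ whose reduct $\langle A;\lor,\land,-,0,1\rangle$ is a Boolean algebra and $\Box$ is an arbitrary unary operation on $A$. It is monotonic if $\Box(x\land y)\le \Box x\land\Box y$ for all $x,y$ (equivalently $x\le y\Rightarrow \Box x\le\Box y$); topped if $\Box 1=1$; cufi if $\Box x\land\Box y\le\Box(x\land y)$ for all $x,y$. A prime filter of a Boolean algebra is a proper filter $F$ ($0\notin F$) such that $x\lor y\in F$ implies $x\in F$ or $y\in F$. For $S\subseteq\mathcal{P}(A)$, a Q-filter for $S$ is a prime filter $F$ such that for every $X\in S$: if the meet $\bigwedge X$ exists in $A$ and $X\subseteq F$, then $\bigwedge X\in F$. $Q_S(A)$ denotes the set of all Q-filters for $S$. A neighborhood frame is a pair $\langle C,\mathcal{V}\rangle$ with $C$ a non-empty set and $\mathcal{V}:C\to\mathcal{P}(\mathcal{P}(C))$. It is monotonic if for every $c\in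 C$, $\mathcal{V}(c)$ is upward closed under $\subseteq$ in $\mathcal{P}(C)$; topped if $C\in\mathcal{V}(c)$ for every $c$; cufi (closed under finite intersections) if for every $c$ and every non-empty finite $T\subseteq\mathcal{V}(c)$, $\bigcap T\in\mathcal{V}(c)$. *)

From HB Require Import structures.
From mathcomp Require Import all_boot all_order.
From mathcomp Require Import boolp classical_sets cardinality.
Set Implicit Arguments. Unset Strict Implicit. Unset Printing Implicit Defensive.
Import Order.TTheory.

Local Open Scope classical_set_scope.

Section ModalAlg.
(* A Boolean algebra is a complemented distributive lattice with top and
   bottom: [ctbDistrLatticeType d].  A modal algebra is such an A together
   with an arbitrary unary operation [box : A -> A]. *)
Context {d : Order.disp_t} {A : ctbDistrLatticeType d}.

Definition monotonic_alg (box : A -> A) : Prop :=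
  forall x y : A, (box (Order.meet x y) <= Order.meet (box x) (box y))%O.

Definition topped_alg (box : A -> A) : Prop := box Order.top = Order.top.

Definition cufi_alg (box : A -> A) : Prop :=
  forall x y : A, (Order.meet (box x) (box y) <= box (Order.meet x y))%O.

Definition is_filter (F : set A) : Prop :=
  F Order.top /\
  (forall x y, F x -> (x <= y)%O -> F y) /\
  (forall x y, F x -> F y -> F (Order.meet x y)).

Definition prime_filter (F : set A) : Prop :=
  is_filter F /\ ~ F Order.bottom /\
  (forall x y, F (Order.join x y) -> F x \/ F y).

Definition is_meet (X : set A) (m : A) : Prop :=
  (forall x, X x -> (m <= x)%O) /\
  (forall l, (forall x, X x -> (l <= x)%O) -> (l <= m)%O).

Definition Q_filter (S : set (set A)) (F : set A) : Prop :=
  prime_filter F /\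
  forall X, S X -> forall m, is_meet X m -> X `<=` F -> F m.

Definition QS (S : set (set A)) : set (set A) := [set F | Q_filter S F].

Definition VA (box : A -> A) (S : set (set A)) (F : set A)
  : set (set (set A)) :=
  [set Y | Y `<=` QS S /\
     exists x, F (box x) /\ [set G | QS S G /\ G x] `<=` Y].
End ModalAlg.

Section Frames.
Context {W : Type}.
(* A neighborhood frame <C, V> with C a subset of an ambient type W and
   V : C -> P(P(C)). *)
Definition nbhd_frame (C : set W) (V : W -> set (set W)) : Prop :=
  C !=set0 /\ forall c, C c -> forall X, V c X -> X `<=` C.

Definition monotonic_frame (C : set W) (V : W -> set (set W)) : Prop :=
  forall c, C c -> forall X Y, V c X -> X `<=` Y -> Y `<=` C -> V c Y.

Definition topped_frame (C : set W) (V : W -> set (set W)) : Prop :=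
  forall c, C c -> V c C.

Definition cufi_frame (C : set W) (V : W -> set (set W)) : Prop :=
  forall c, C c -> forall T : set (set W),
    finite_set T -> T !=set0 -> T `<=` V c -> V c (\bigcap_(X in T) X).
End Frames.

(* The frame J_S(A) = <Q_S(A), V_A> is monotonic by construction, since V_A(F)
   is defined as an upward closure inside P(Q_S(A)).  If box 1 = 1, the whole
   of Q_S(A) is the extent of 1 and hence a neighborhood of every F.  If box is
   cufi, the neighborhood witnessed by x and the one witnessed by y meet in a
   neighborhood witnessed by x /\ y, since box x /\ box y <= box (x /\ y) and
   the extent of x /\ y lies in both extents; induction over a list then
   handles nonempty finite families.

   The substantial point is that Q_S(A) is nonempty, i.e. J_S(A) is a frame at
   all.  This is the Rasiowa--Sikorski lemma: for each X in the countable
   family S, the elements deciding X (lying below its meet, or below the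
   complement of one of its members) are dense, so one builds a descending
   chain of nonzero elements deciding every member of S in turn.  Its upward
   closure is a proper filter, which extends by Zorn's lemma to a maximal, hence
   prime, filter; that prime filter preserves all meets of members of S. *)

From mathcomp Require Import all_boot all_order.
From mathcomp Require Import boolp classical_sets cardinality.
Set Implicit Arguments. Unset Strict Implicit. Unset Printing Implicit Defensive.
Import Order.Theory.
Local Open Scope classical_set_scope.

Lemma set_seq_cons (T : eqType) (x : T) (s : seq T) :
  [set` x :: s] = x |` [set` s].
Proof.
apply/seteqP; split=> y /=; rewrite inE; first by move=> /orP[/eqP ->|sy]; [left|right].
by move=> [->|sy]; rewrite ?eqxx ?sy ?orbT.
Qed.

Section FilterTheory.
Context {d : Order.disp_t} {A : ctbDistrLatticeType d}.
Local Open Scope order_scope.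

Definition proper_filter (F : set A) : Prop := is_filter F /\ ~ F \bot.

Lemma proper_filter_compl (F : set A) x :
  proper_filter F -> F x -> F (~` x) -> False.
Proof.
by move=> [[_ [_ Fmeet]] Fbot] Fx Fcx; apply: Fbot; rewrite -(meetxC x); apply: Fmeet.
Qed.

Definition filter_adjoin (F : set A) (z : A) : set A :=
  [set w | exists2 a, F a & a `&` z <= w].

Lemma filter_adjoin_filter (F : set A) z : is_filter F -> is_filter (filter_adjoin F z).
Proof.
move=> [Ftop [_ Fmeet]]; split; first by exists \top => //; exact: lex1.
split=> [x y [a Fa le_ax] le_xy|x y [a Fa le_ax] [b Fb le_by]].
  by exists a => //; exact: le_trans le_xy.
exists (a `&` b); first exact: Fmeet.
rewrite lexI; apply/andP; split.
  by apply: le_trans le_ax; rewrite leI2 ?leIl.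
by apply: le_trans le_by; rewrite leI2 ?leIr.
Qed.

Lemma filter_adjoin_ext (F : set A) z : F `<=` filter_adjoin F z.
Proof. by move=> w Fw; exists w => //; exact: leIl. Qed.

Lemma filter_adjoin_mem (F : set A) z : is_filter F -> filter_adjoin F z z.
Proof. by move=> [Ftop _]; exists \top => //; exact: leIr. Qed.

Lemma maximal_filter_refutes (U : set A) z :
  proper_filter U -> (forall G, proper_filter G -> U `<=` G -> G `<=` U) ->
  ~ U z -> exists2 a, U a & a `&` z <= \bot.
Proof.
move=> [filU _] maxU Uz; apply: contrapT => no_refutation.
apply: Uz; apply: (maxU (filter_adjoin U z)).
- split; first exact: filter_adjoin_filter.
  by move=> [a Ua le_bot]; apply: no_refutation; exists a.
- exact: filter_adjoin_ext.
- exact: filter_adjoin_mem.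
Qed.

Lemma maximal_filter_prime (U : set A) :
  proper_filter U -> (forall G, proper_filter G -> U `<=` G -> G `<=` U) ->
  prime_filter U.
Proof.
move=> propU maxU; have [[Utop [Uup Umeet]] Ubot] := propU.
split=> //; split=> // x y Uxy.
have [Ux|Ux] := pselect (U x); first by left.
have [Uy|Uy] := pselect (U y); first by right.
have [a Ua ax_bot] := maximal_filter_refutes propU maxU Ux.
have [b Ub by_bot] := maximal_filter_refutes propU maxU Uy.
exfalso; apply: Ubot; apply: (Uup ((a `&` b) `&` (x `|` y))).
  exact: Umeet (Umeet _ _ Ua Ub) Uxy.
rewrite meetUr leUx; apply/andP; split.
  by apply: le_trans ax_bot; rewrite leI2 ?leIl.
by apply: le_trans by_bot; rewrite leI2 ?leIr.
Qed.

Lemma chain_union_proper_filter (C : set (set A)) :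
  C !=set0 -> (forall X, C X -> proper_filter X) -> total_on C subset ->
  proper_filter (\bigcup_(X in C) X).
Proof.
move=> [X0 CX0] propC chainC; split; last by move=> [X CX] /(propC X CX).2.
split; first by exists X0 => //; have [[]] := propC X0 CX0.
split=> [x y [X CX Xx] le_xy|x y [X CX Xx] [Y CY Yy]].
  by exists X => //; have [[_ [Xup _]] _] := propC X CX; exact: Xup le_xy.
have [XY|YX] := chainC X Y CX CY.
  by exists Y => //; have [[_ [_ Ymeet]] _] := propC Y CY; apply: Ymeet => //; exact: XY.
by exists X => //; have [[_ [_ Xmeet]] _] := propC X CX; apply: Xmeet => //; exact: YX.
Qed.

Lemma prime_filter_extension (F : set A) :
  proper_filter F -> exists2 U, prime_filter U & F `<=` U.
Proof.
move=> propF.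
pose P (X : set A) := F `<=` X /\ proper_filter X.
pose T := {X : set A | P X}.
pose R (X Y : T) := `[< sval X `<=` sval Y >].
have [||C chainC|U maxU] := @ZL_preorder T (exist P F (conj (@subset_refl _ F) propF)) R.
- by move=> X; apply/asboolP.
- by move=> X Y Z /asboolP XY /asboolP YZ; apply/asboolP; exact: subset_trans YZ.
- have [[X0 CX0]|C0] := pselect (C !=set0); last first.
    exists (exist P F (conj (@subset_refl _ F) propF)) => X CX.
    by exfalso; apply: C0; exists X.
  have chain_val : total_on [set sval X | X in C] subset.
    move=> _ _ [X CX <-] [Y CY <-].
    by have [/asboolP|/asboolP] := chainC X Y CX CY; [left|right].
  have prop_union : proper_filter (\bigcup_(X in [set sval X | X in C]) X).
    apply: chain_union_proper_filter => //; first by exists (sval X0), X0.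
    by move=> _ [X _ <-]; exact: (svalP X).2.
  have F_union : F `<=` \bigcup_(X in [set sval X | X in C]) X.
    by move=> w Fw; exists (sval X0); [exists X0|exact: (svalP X0).1].
  exists (exist P _ (conj F_union prop_union)) => X CX; apply/asboolP.
  by move=> w Xw; exists (sval X) => //; exists X.
- case: U maxU => U [FU propU] maxU; exists U => //.
  apply: maximal_filter_prime => // G propG UG.
  have UG_R : R (exist P U (conj FU propU)) (exist P G (conj (subset_trans FU UG) propG)).
    exact/asboolP.
  by have /asboolP := maxU _ UG_R.
Qed.

(* [a] decides the set [X] (in the sense of Rasiowa--Sikorski): any proper
   filter containing [a] contains the meet of [X], or omits some element of
   [X]. *)
Definition decides (X : set A) (a : A) : Prop :=
  forall m, is_meet X m -> a <= m \/ exists2 x, X x & a <= ~` x.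

Lemma decides_dense (X : set A) a :
  a != \bot -> exists b, [/\ b != \bot, b <= a & decides X b].
Proof.
move=> a0; have [[m0 meet_m0]|no_meet] := pselect (exists m, is_meet X m); last first.
  by exists a; split=> // m meet_m; exfalso; apply: no_meet; exists m.
have le_m0 m : is_meet X m -> m0 <= m by move=> meet_m; apply: meet_m.2; exact: meet_m0.1.
have [am0|am0] := eqVneq (a `&` m0) \bot; last first.
  exists (a `&` m0); split; rewrite ?leIl // => m /le_m0 le_m0m.
  by left; exact: le_trans (leIr _ _) le_m0m.
have [[x Xx ax]|no_x] := pselect (exists2 x, X x & a `&` ~` x != \bot).
  by exists (a `&` ~` x); split; rewrite ?leIl // => m _; right; exists x; rewrite ?leIr.
have le_am0 : a <= m0.
  apply: meet_m0.2 => x Xx; rewrite -[x]complK -disj_leC.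
  by apply: contrapT => /negP ax; apply: no_x; exists x.
by move: a0; rewrite -am0 (meet_l le_am0) eqxx.
Qed.

Lemma deciding_chain (e : nat -> set A) :
  (\top : A) != \bot ->
  exists a : nat -> A,
    [/\ forall n, a n != \bot, forall n, a n.+1 <= a n & forall n, decides (e n) (a n.+1)].
Proof.
move=> top0; pose N := {b : A | b != \bot}.
have next (b : N) n : {c : N | sval c <= sval b /\ decides (e n) (sval c)}.
  have /cid[c [c0 le_cb dec_c]] := decides_dense (e n) (svalP b).
  by exists (exist _ c c0).
pose a := fix a n : N := if n is k.+1 then sval (next (a k) k) else exist _ \top top0.
exists (fun n => sval (a n)); split=> n; first exact: (svalP (a n)).
  exact: (svalP (next (a n) n)).1.
exact: (svalP (next (a n) n)).2.
Qed.

Lemma chain_proper_filter (a : nat -> A) :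
  (forall n, a n != \bot) -> (forall n, a n.+1 <= a n) ->
  proper_filter [set y | exists n, a n <= y].
Proof.
move=> a0 a_dec.
have a_anti i j : (i <= j)%N -> a j <= a i.
  move=> /subnK <-; elim: (j - i)%N => [|k IH] //=.
  exact: le_trans (a_dec _) IH.
split; last by move=> [n]; rewrite lex0; apply/negP.
split; first by exists 0%N; exact: lex1.
split=> [x y [n le_x] le_xy|x y [n le_x] [k le_y]]; first by exists n; exact: le_trans le_xy.
exists (maxn n k); rewrite lexI (le_trans _ le_x) ?(le_trans _ le_y) //.
  exact/a_anti/leq_maxr.
exact/a_anti/leq_maxl.
Qed.

Lemma QS_nonempty (S : set (set A)) :
  (\bot : A) <> \top -> countable S -> QS S !=set0.
Proof.
move=> bot_top /pcard_surjP[e S_enum].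
have top0 : (\top : A) != \bot by apply/eqP => top_bot; apply: bot_top.
have [a [a0 a_dec a_decides]] := deciding_chain e top0.
have [U primeU chainU] := prime_filter_extension (chain_proper_filter a0 a_dec).
have [[_ [Uup _]] [Ubot _]] := primeU.
exists U; split=> // X SX m meet_m XU.
have [n _ enX] := S_enum X SX; rewrite -enX in meet_m XU.
have Ua : U (a n.+1) by apply: chainU; exists n.+1.
have [le_am|[x Xx le_ax]] := a_decides n m meet_m; first exact: Uup le_am.
exfalso; apply: (@proper_filter_compl U x); first by split; [exact: primeU.1|].
  exact: XU.
exact: Uup le_ax.
Qed.
End FilterTheory.

Section CanonicalFrame.
Context {d : Order.disp_t} {A : ctbDistrLatticeType d}.
Variables (box : A -> A) (S : set (set A)).
Local Open Scope order_scope.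
Local Open Scope classical_set_scope.

Definition extent (x : A) : set (set A) := [set G | QS S G /\ G x].

Lemma extent_le x y : (x <= y)%O -> extent x `<=` extent y.
Proof.
move=> le_xy G [QG Gx]; split=> //.
by have [[[_ [Gup _]] _] _] := QG; exact: Gup Gx le_xy.
Qed.

Lemma VA_upward (F : set A) (X Y : set (set A)) :
  VA box S F X -> X `<=` Y -> Y `<=` QS S -> VA box S F Y.
Proof.
by move=> [_ [x [Fx extX]]] XY YQ; split=> //; exists x; split=> //; exact: subset_trans XY.
Qed.

Lemma VA_top (F : set A) : topped_alg box -> is_filter F -> VA box S F (QS S).
Proof.
by move=> box_top [Ftop _]; split=> //; exists \top; rewrite box_top; split=> // G [].
Qed.

Lemma VA_setI (F : set A) (X Y : set (set A)) :
  cufi_alg box -> is_filter F ->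
  VA box S F X -> VA box S F Y -> VA box S F (X `&` Y).
Proof.
move=> cufi [_ [Fup Fmeet]] [XQ [x [Fx extX]]] [_ [y [Fy extY]]].
split; first by move=> G [/XQ].
exists (x `&` y)%O; split; first exact: Fup (Fmeet _ _ Fx Fy) (cufi x y).
move=> G Gxy; split; [apply: extX | apply: extY].
  exact: extent_le (leIl x y) _ Gxy.
exact: extent_le (leIr y x) _ Gxy.
Qed.

Lemma VA_bigcap (F : set A) (Y : set (set A)) (s : seq (set (set A))) :
  cufi_alg box -> is_filter F -> [set` Y :: s] `<=` VA box S F ->
  VA box S F (\bigcap_(X in [set` Y :: s]) X).
Proof.
move=> cufi filF; elim: s Y => [|Z s IH] Y sV.
  by rewrite set_cons1 bigcap_set1; apply: sV; rewrite /= inE.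
rewrite set_seq_cons bigcap_setU1; apply: VA_setI => //.
  by apply: sV; rewrite /= inE eqxx.
by apply: IH => X sX; apply: sV; rewrite /= inE sX orbT.
Qed.
End CanonicalFrame.

Theorem mainTheorem1 (d : Order.disp_t) (A : ctbDistrLatticeType d)
  (box : A -> A) (S : set (set A)) :
  (Order.bottom : A) <> Order.top ->
  monotonic_alg box ->
  countable S ->
  nbhd_frame (QS S) (VA box S) /\
  monotonic_frame (QS S) (VA box S) /\
  (topped_alg box -> topped_frame (QS S) (VA box S)) /\
  (cufi_alg box -> cufi_frame (QS S) (VA box S)).
Proof.
move=> bot_top _ countS.
have QS_filter F : QS S F -> is_filter F by case=> [[]].
split; first by split; [exact: QS_nonempty | move=> F _ X []].
split; first by move=> F _ X Y; exact: VA_upward.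
split; first by move=> box_top F /QS_filter; exact: VA_top.
move=> cufi F /QS_filter filF T finT T0 TV.
have [[|Y s] defT] := (finite_seqP T).1 finT; first by move: T0; rewrite defT => -[].
by rewrite defT; apply: VA_bigcap; rewrite -?defT.
Qed.
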